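(* Let $(X,+)$ be an abelian group, $(g,\gamma)$ a construction pair on $(X,+)$, and $C=\langle b\rangle$ a cyclic group. The following are equivalent: (i) The formula $$(b^i,x)\cdot(b^j,y)=\Big(b^{i+j},\ g^{-j}(x)+y+\sum_{k\in I(i+j,-j)}g^{-k}(\gamma(x,y))\Big)\qquad(i,j\in\mathbb Z,\ x,y\in X)$$ correctly defines a multiplication on $C\times X$ (i.e., the right-hand side depends only on the elements $b^i,b^j\in C$ and not on the chosen exponents $i,j$). (ii) Either $C$ is infinite, or $C$ is finite, the order $|g|$ of $g$ (as a permutation) divides $|C|$, and $\sum_{0\le k<|C|}g^k(x)\in\mathrm{Rad}(\gamma)$ for every $x\in X$. (iii) Either $C$ is infinite, or $C$ is finite, $|g|$ divides $|C|$, and $r(g,\gamma)$ divides $|C|$.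
   Context: Let $(X,+)$ be an abelian group. A map $\gamma:X\times X\to X$ is symmetric if $\gamma(x,y)=\gamma(y,x)$, alternating if $\gamma(x,x)=0$, biadditive if additive in each argument. Its radical is $\mathrm{Rad}(\gamma)=\{x\in X:\gamma(x,y)=0\text{ for all }y\in X\}$. A construction pair on $(X,+)$ is a pair $(g,\gamma)$ where $g$ is a permutation of $X$ and $\gamma:X\times X\to X$ is symmetric, alternating and biadditive, such that for all $x,y,z\in X$: (C1) $g^{-1}(g(x)+g(y))=x+y+\gamma(x,y)+g^{-1}(\gamma(x,y))+g^{-2}(\gamma(x,y))$; (C2) $\gamma(\gamma(x,y),z)=0$; (C3) $g^{-1}(\gamma(x,y))=\gamma(g(x),y)$. For integers $i,j$ the interval $I(i,j)\subseteq\mathbb Z$ is $\emptyset$ if $i=j$, $\{i,i+1,\dots,j-1\}$ if $i<j$, and $\{j,j+1,\dots,i-1\}$ if $j<i$. For a construction pair $(g,\gamma)$, $r(g,\gamma)$ is the least positive integer $r$ such that $\sum_{0\le k<r}g^k(x)\in\mathrm{Rad}(\gamma)$ for every $x\in X$, and $r(g,\gamma)=\infty$ if no such $r$ exists. *)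

From mathcomp Require Import all_boot all_order all_algebra.
Set Implicit Arguments. Unset Strict Implicit. Unset Printing Implicit Defensive.
Import Order.TTheory GRing.Theory Num.Theory.
Local Open Scope ring_scope.

Section Defs.
Variable X : zmodType.

Definition is_perm_pair (g gi : X -> X) : Prop := cancel g gi /\ cancel gi g.

Definition gpow (g gi : X -> X) (k : int) : X -> X :=
  match k with
  | Posz m => iter m g
  | Negz m => iter m.+1 gi
  end.

Definition Rad (gamma : X -> X -> X) (x : X) : Prop :=
  forall y, gamma x y = 0.

Definition construction_pair (g gi : X -> X) (gamma : X -> X -> X) : Prop :=
  is_perm_pair g gi /\
  [/\ (forall x y, gamma x y = gamma y x),
      (forall x, gamma x x = 0),
      (forall x x' y, gamma (x + x') y = gamma x y + gamma x' y),
      (forall x y y', gamma x (y + y') = gamma x y + gamma x y') &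
  [/\
      (* (C1) *)
      (forall x y, gi (g x + g y) =
          x + y + gamma x y + gi (gamma x y) + gi (gi (gamma x y))),
      (* (C2) *)
      (forall x y z, gamma (gamma x y) z = 0) &
      (* (C3) *)
      (forall x y, gi (gamma x y) = gamma (g x) y)]].

Definition perm_order_is (g : X -> X) (m : nat) : Prop :=
  (0 < m)%N /\ (forall x, iter m g x = x) /\
  (forall k, (0 < k < m)%N -> ~ (forall x, iter k g x = x)).

Definition r_is (g : X -> X) (gamma : X -> X -> X) (m : nat) : Prop :=
  (0 < m)%N /\ (forall x, Rad gamma (\sum_(k < m) iter k g x)) /\
  (forall k, (0 < k < m)%N -> ~ (forall x, Rad gamma (\sum_(l < k) iter l g x))).

End Defs.

Definition Iint (i j : int) : seq int :=
  if i <= j then [seq i + (k%:Z) | k <- iota 0 `|j - i|%N]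
  else [seq j + (k%:Z) | k <- iota 0 `|i - j|%N].

(* second component of (b^i,x).(b^j,y) *)
Definition mult2 (X : zmodType) (g gi : X -> X) (gamma : X -> X -> X)
  (i j : int) (x y : X) : X :=
  gpow g gi (- j) x + y + \sum_(k <- Iint (i + j) (- j)) gpow g gi (- k) (gamma x y).

From mathcomp Require Import all_boot all_order all_algebra.
From mathcomp Require Import zify.
From Stdlib Require Import Classical.
Set Implicit Arguments. Unset Strict Implicit. Unset Printing Implicit Defensive.
Import Order.TTheory GRing.Theory Num.Theory.
Local Open Scope ring_scope.

(* By (C3), g^{-k}(gamma x y) = gamma (g^k x) y =: h k, and 2 gamma = 0, so the second
   component is g^{-j} x + y + (sum of h over the interval between i+j and -j), where the
   orientation of the interval is irrelevant.  Replacing i by i + n adds to that sum the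
   values of h on n consecutive integers a, ..., a+n-1, i.e. gamma (sum_{t<n} g^t (g^a x)) y;
   replacing j by j + n moreover replaces g^{-j} x by g^{-n} (g^{-j} x).  Hence the formula is
   well defined modulo n iff g^n = id and sum_{t<n} g^t x lies in Rad gamma for every x.
   Both conditions single out a set of naturals closed under sums and differences, which
   contains n > 0 iff its least positive element (|g|, resp. r(g,gamma)) divides n. *)

Definition subtractive (P : nat -> Prop) : Prop :=
  [/\ P 0%N, forall s t, P s -> P t -> P (s + t)%N
           & forall s t, P s -> P (s + t)%N -> P t].

Section Subtractive.
Variable P : nat -> Prop.
Hypothesis Psub : subtractive P.

Lemma subtractive_mul m q : P m -> P (q * m)%N.
Proof.
case: Psub => P0 PD _ Pm; elim: q => [|q IHq]; first by rewrite mul0n.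
by rewrite mulSn; apply: PD.
Qed.

Lemma ex_least_pos n : (0 < n)%N -> P n ->
  exists m, (0 < m)%N /\ P m /\ (forall k, (0 < k < m)%N -> ~ P k).
Proof.
elim/ltn_ind: n => n IHn n_gt0 Pn.
have [[k [/andP[k_gt0 lt_kn] Pk]] | no_less] :=
  classic (exists k, (0 < k < n)%N /\ P k); first exact: IHn Pk.
by exists n; do 2!split=> //; move=> k lt_kn Pk; apply: no_less; exists k.
Qed.

Lemma least_pos_dvd_iff n : (0 < n)%N ->
  P n <-> exists m,
    ((0 < m)%N /\ P m /\ (forall k, (0 < k < m)%N -> ~ P k)) /\ (m %| n)%N.
Proof.
move=> n_gt0; split=> [Pn | [m [[_ [Pm _]] /dvdnP[q ->]]]]; last first.
  exact: subtractive_mul.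
have [m [m_gt0 [Pm m_least]]] := ex_least_pos n_gt0 Pn.
exists m; split=> //; rewrite /dvdn eqn0Ngt; apply/negP => r_gt0.
apply: (m_least (n %% m)%N); first by rewrite r_gt0 ltn_pmod.
case: Psub => _ _ PB; apply: (PB (n %/ m * m)%N); first exact: subtractive_mul.
by rewrite -divn_eq.
Qed.

End Subtractive.

Section IntervalSums.
Variable X : zmodType.
Implicit Types (h : int -> X) (a b : int).

Definition Isum h a b : X := \sum_(k <- Iint a b) h k.

Definition blocksum h a (l : nat) : X := \sum_(t < l) h (a + t%:Z).

Lemma Isum_sym h a b : Isum h a b = Isum h b a.
Proof.
rewrite /Isum /Iint; case: (ltgtP a b) => [ab|ab|->] //;
  by rewrite (ltW ab) leNgt ab /= -abszN opprB.
Qed.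

Lemma Isum_addn h a (l : nat) : Isum h a (a + l%:Z) = blocksum h a l.
Proof.
rewrite /Isum /Iint lerDl le0z_nat addrC addKr absz_nat big_map.
by rewrite /blocksum -(big_mkord xpredT (fun t => h (a + t%:Z))) /index_iota subn0.
Qed.

Lemma blocksum_split h a l1 l2 :
  blocksum h a (l1 + l2) = blocksum h a l1 + blocksum h (a + l1%:Z) l2.
Proof.
rewrite /blocksum big_split_ord /=; congr (_ + _); apply: eq_bigr => t _.
by rewrite PoszD addrA.
Qed.

(* Since h has exponent 2, removing a block from one end of an interval is the same as
   adding it, so a vanishing n-block can be moved across either endpoint. *)
Lemma Isum_shift h (n : nat) :
  (forall k, h k + h k = 0) -> (forall a, blocksum h a n = 0) ->
  forall a b, Isum h (a + n%:Z) b = Isum h a b.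
Proof.
move=> h_double block0 a b.
have [le_ba | lt_ab] := lerP b a.
  have [l ->] : exists l : nat, a = b + l%:Z by exists (absz (a - b)%R); lia.
  rewrite -addrA -PoszD Isum_sym Isum_addn blocksum_split block0 addr0.
  by rewrite Isum_sym Isum_addn.
have [le_anb | lt_ban] := lerP (a + n%:Z) b.
  have [l ->] : exists l : nat, b = a + n%:Z + l%:Z.
    by exists (absz (b - (a + n%:Z))%R); lia.
  by rewrite Isum_addn -addrA -PoszD Isum_addn blocksum_split block0 add0r.
have [l [l' [-> n_split]]] : exists l l' : nat, b = a + l%:Z /\ n = (l + l')%N.
  by exists (absz (b - a)%R), (absz (a + n%:Z - b)%R); split; lia.
have := block0 a; rewrite n_split blocksum_split => block_a.
rewrite Isum_addn PoszD addrA Isum_sym Isum_addn.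
by apply/(addrI (blocksum h a l)); rewrite block_a -big_split /= big1.
Qed.

End IntervalSums.

Lemma eqz_mod_periodic (T : Type) (F : int -> T) (n : nat) :
  (forall i, F (i + n%:Z) = F i) ->
  forall i i', (i = i' %[mod n%:Z])%Z -> F i = F i'.
Proof.
move=> F_per.
have F_perM : forall q i, F (i + q * n%:Z) = F i.
  have F_perMn : forall (m : nat) i, F (i + m%:Z * n%:Z) = F i.
    elim=> [|m IHm] i; first by rewrite mul0r addr0.
    by rewrite -addn1 PoszD mulrDl mul1r addrA F_per IHm.
  case=> m i; first exact: F_perMn.
  by rewrite NegzE mulNr -{2}(subrK (m.+1%:Z * n%:Z) i) F_perMn.
move=> i i' /eqP; rewrite eqz_mod_dvd => /divzK i_i'.
by rewrite -(F_perM ((i - i') %/ n%:Z)%Z i') i_i' addrC subrK.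
Qed.

Lemma iter_can (T : Type) (f f' : T -> T) n :
  cancel f f' -> cancel (iter n f) (iter n f').
Proof. by move=> fK; elim: n => [|n IHn] x //; rewrite iterSr iterS fK IHn. Qed.

Section PermPowers.
Variables (X : zmodType) (g gi : X -> X).
Hypotheses (gK : cancel g gi) (giK : cancel gi g).

Lemma gpowD1 a x : gpow g gi (a + 1) x = g (gpow g gi a x).
Proof.
case: a => [m|[|m]].
- by have -> : Posz m + 1 = Posz m.+1 by lia.
- by rewrite /= giK.
- have -> : Negz m.+1 + 1 = Negz m by rewrite !NegzE; lia.
  by rewrite /= giK.
Qed.

Lemma gpowB1 a x : gpow g gi (a - 1) x = gi (gpow g gi a x).
Proof. by rewrite -{2}(subrK 1 a) gpowD1 gK. Qed.

Lemma gpowDn a (m : nat) x : gpow g gi (a + m%:Z) x = iter m g (gpow g gi a x).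
Proof.
elim: m => [|m IHm]; first by rewrite addr0.
by rewrite -addn1 PoszD addrA gpowD1 IHm addn1.
Qed.

Lemma gpowBn a (m : nat) x : gpow g gi (a - m%:Z) x = iter m gi (gpow g gi a x).
Proof.
elim: m => [|m IHm]; first by rewrite subr0.
by rewrite -addn1 PoszD opprD addrA gpowB1 IHm addn1.
Qed.

Lemma gpowNn (m : nat) x : gpow g gi (- m%:Z) x = iter m gi x.
Proof. by case: m => [|m] //; rewrite -NegzE. Qed.

End PermPowers.

Definition iter_id (X : Type) (g : X -> X) (t : nat) : Prop :=
  forall x, iter t g x = x.

Definition rad_sum (X : zmodType) (g : X -> X) (gamma : X -> X -> X) (t : nat) :
  Prop :=
  forall x, Rad gamma (\sum_(k < t) iter k g x).

Lemma iter_id_subtractive (X : Type) (g : X -> X) : subtractive (iter_id g).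
Proof.
split=> // [s t gs gt x | s t gs gst x]; first by rewrite iterD gt gs.
by rewrite -{1}(gs x) -iterD addnC gst.
Qed.

Definition mult2_wd (X : zmodType) (g gi : X -> X) (gamma : X -> X -> X) (n : nat) :=
  forall (i i' j j' : int) (x y : X),
    (i = i' %[mod n%:Z])%Z -> (j = j' %[mod n%:Z])%Z ->
    mult2 g gi gamma i j x y = mult2 g gi gamma i' j' x y.

(* Only (C3) among (C1)-(C3) is needed. *)
Section ConstructionPair.
Variables (X : zmodType) (g gi : X -> X) (gamma : X -> X -> X).
Hypotheses (gK : cancel g gi) (giK : cancel gi g).
Hypotheses (gammaC : forall x y, gamma x y = gamma y x)
           (gamma_alt : forall x, gamma x x = 0)
           (gammaDl : forall x x' y, gamma (x + x') y = gamma x y + gamma x' y)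
           (gammaDr : forall x y y', gamma x (y + y') = gamma x y + gamma x y')
           (gi_gamma : forall x y, gi (gamma x y) = gamma (g x) y).

Lemma gamma0l y : gamma 0 y = 0.
Proof. by apply/(addIr (gamma 0 y)); rewrite -gammaDl !add0r. Qed.

Lemma gamma0r x : gamma x 0 = 0.
Proof. by rewrite gammaC gamma0l. Qed.

Lemma gamma_suml I (r : seq I) (P : pred I) (F : I -> X) y :
  gamma (\sum_(i <- r | P i) F i) y = \sum_(i <- r | P i) gamma (F i) y.
Proof. exact: (big_morph (gamma^~ y) (fun a b => gammaDl a b y) (gamma0l y)). Qed.

Lemma gamma_double x y : gamma x y + gamma x y = 0.
Proof.
have := gamma_alt (x + y).
by rewrite gammaDl !gammaDr !gamma_alt add0r addr0 [gamma y x]gammaC.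
Qed.

Lemma gpow_gamma a x y : gpow g gi (- a) (gamma x y) = gamma (gpow g gi a x) y.
Proof.
have iter_gi_gamma k : iter k gi (gamma x y) = gamma (iter k g x) y.
  by elim: k => //= k ->; rewrite gi_gamma.
have iter_g_gamma k : iter k g (gamma x y) = gamma (iter k gi x) y.
  by elim: k => //= k ->; rewrite -{1}(giK (iter k gi x)) -gi_gamma giK.
case: a => m; first by rewrite gpowNn iter_gi_gamma.
by rewrite NegzE opprK; apply: (iter_g_gamma m.+1).
Qed.

Lemma rad_sum_subtractive : subtractive (rad_sum g gamma).
Proof.
have sum_split s t x : \sum_(k < s + t) iter k g x =
    \sum_(k < s) iter k g x + \sum_(k < t) iter k g (iter s g x).
  by rewrite big_split_ord /=; congr (_ + _); apply: eq_bigr => k _; rewrite -iterD addnC.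
split=> [x y | s t Rs Rt x y | s t Rs Rst x y].
- by rewrite big_ord0 gamma0l.
- by rewrite sum_split gammaDl Rs Rt addr0.
- have := Rst (iter s gi x) y; rewrite sum_split gammaDl Rs add0r.
  by rewrite (iter_can s giK).
Qed.

Let h x y : int -> X := fun k => gamma (gpow g gi k x) y.

Lemma mult2E i j x y :
  mult2 g gi gamma i j x y = gpow g gi (- j) x + y + Isum (h x y) (i + j) (- j).
Proof.
by rewrite /mult2 /Isum; congr (_ + _); apply: eq_bigr => k _; rewrite gpow_gamma.
Qed.

Lemma mult2_y0 i j x : mult2 g gi gamma i j x 0 = gpow g gi (- j) x.
Proof. by rewrite mult2E /Isum big1 => [|k _]; rewrite ?addr0 // /h gamma0r. Qed.

Lemma blocksum_gamma x y a (n : nat) :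
  blocksum (h x y) a n = gamma (\sum_(t < n) iter t g (gpow g gi a x)) y.
Proof. by rewrite gamma_suml; apply: eq_bigr => t _; rewrite /h gpowDn. Qed.

Lemma mult2_wd_iter_id n : mult2_wd g gi gamma n -> iter_id g n.
Proof.
move=> wd x; have := wd 0 0 0 (- n%:Z) x 0 (erefl _).
by rewrite !mult2_y0 oppr0 opprK -(mulN1r n%:Z) modzMl mod0z => /(_ erefl) /= <-.
Qed.

Lemma mult2_wd_rad_sum n : mult2_wd g gi gamma n -> rad_sum g gamma n.
Proof.
move=> wd x y; have := wd n%:Z 0 0 0 x y; rewrite modzz mod0z => /(_ erefl erefl).
rewrite !mult2E !oppr0 !addr0 => /addrI.
rewrite Isum_sym -[n%:Z]add0r Isum_addn blocksum_gamma.
by rewrite /Isum /Iint lexx subrr big_nil.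
Qed.

Lemma iter_id_rad_sum_mult2_wd n :
  iter_id g n -> rad_sum g gamma n -> mult2_wd g gi gamma n.
Proof.
move=> gn_id Rn i i' j j' x y; pose F := mult2 g gi gamma.
have shift := @Isum_shift _ (h x y) n (fun k => gamma_double _ y)
  (fun a => etrans (blocksum_gamma x y a n) (Rn _ y)).
have F_peri i1 j1 : F (i1 + n%:Z) j1 x y = F i1 j1 x y.
  by rewrite /F !mult2E [i1 + n%:Z + j1]addrAC shift.
have F_perj i1 j1 : F i1 (j1 + n%:Z) x y = F i1 j1 x y.
  rewrite /F !mult2E opprD addrA gpowBn //.
  rewrite -{1}(gn_id (gpow g gi (- j1) x)) iter_can //.
  by rewrite shift Isum_sym [in RHS]Isum_sym -(shift (- j1 - n%:Z)) subrK.
move=> eq_i eq_j.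
rewrite -/(F i j x y) (eqz_mod_periodic (F := fun i1 => F i1 j x y) (F_peri^~ j) eq_i).
exact: (eqz_mod_periodic (F := fun j1 => F i' j1 x y) (F_perj i') eq_j).
Qed.

Lemma mult2_wd_iff n :
  mult2_wd g gi gamma n <-> iter_id g n /\ rad_sum g gamma n.
Proof.
split=> [wd | [gn_id Rn]]; last exact: iter_id_rad_sum_mult2_wd.
by split; [apply: mult2_wd_iter_id | apply: mult2_wd_rad_sum].
Qed.

End ConstructionPair.

Theorem mainTheorem1 (X : zmodType) (g gi : X -> X) (gamma : X -> X -> X)
  (n : nat) :
  construction_pair g gi gamma ->
  let wd := forall (i i' j j' : int) (x y : X),
      (i = i' %[mod n%:Z])%Z -> (j = j' %[mod n%:Z])%Z ->
      mult2 g gi gamma i j x y = mult2 g gi gamma i' j' x y in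
  let c2 := n = 0%N \/
      [/\ (0 < n)%N, (exists m, perm_order_is g m /\ (m %| n)%N) &
          forall x, Rad gamma (\sum_(k < n) iter k g x)] in
  let c3 := n = 0%N \/
      [/\ (0 < n)%N, (exists m, perm_order_is g m /\ (m %| n)%N) &
          exists r, r_is g gamma r /\ (r %| n)%N] in
  (wd <-> c2) /\ (c2 <-> c3).
Proof.
case=> [[gK giK] [gammaC gamma_alt gammaDl gammaDr [_ _ gi_gamma]]] /=.
have wdE := mult2_wd_iff gK giK gammaC gamma_alt gammaDl gammaDr gi_gamma.
have idE := least_pos_dvd_iff (iter_id_subtractive g).
have radE := least_pos_dvd_iff (rad_sum_subtractive giK gammaDl).
have [-> | n_gt0] := posnP n.
  have wd0 : mult2_wd g gi gamma 0.
    by apply/wdE; split=> //; case: (rad_sum_subtractive giK gammaDl).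
  by split; split=> _; [left | exact: wd0 | left | left].
split; split.
- by case/wdE => /(idE _ n_gt0) ? ?; right.
- by case=> [n0 | [_ /(idE _ n_gt0) ? ?]]; [rewrite n0 in n_gt0 | apply/wdE].
- by case=> [n0 | [_ ? /(radE _ n_gt0) ?]]; [rewrite n0 in n_gt0 | right].
- by case=> [n0 | [_ ? /(radE _ n_gt0) ?]]; [rewrite n0 in n_gt0 | right].
Qed.
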